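(* Let $\{p_\eta:\eta>0\}$ be a minimal exponential family of densities $p_\eta(x)=h(x)e^{\eta T(x)-A(\eta)}$ whose log-partition function has the form $A(\eta)=c_1\log\eta+c_2$ with constants $c_1\neq0$, $c_2\in\mathbb{R}$, and let $\ell$ denote the logarithmic loss. Fix $\eta,\eta_2>0$ and set $x=-\frac{\eta_2}{\eta}\exp\!\big(-\frac{\eta_2}{\eta}\big)\in[-1/e,0)$. Then the set of $\eta_1>0$ for which $\ell(p_{\eta_1},p_\eta)-\ell(p_{\eta_2},p_\eta)=0$ is exactly $\{-\eta\,W_0(x),\,-\eta\,W_{-1}(x)\}$, where $W_0$ and $W_{-1}$ are the two real branches of the Lambert function (the real solutions $w$ of $w e^{w}=x$ for $x\in[-1/e,0)$).
   Context: $\ell(p_{\eta_1},p_\eta)=\mathbb{E}[-\log p_{\eta_1}(Y)]$ for $Y\sim p_\eta$. A single-parameter exponential family is minimal if $T$ is not almost everywhere constant. *)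

From HB Require Import structures.
From mathcomp Require Import all_boot all_order all_algebra.
From mathcomp Require Import all_classical all_reals all_analysis.
Set Implicit Arguments. Unset Strict Implicit. Unset Printing Implicit Defensive.
Import Order.TTheory GRing.Theory Num.Theory.
Local Open Scope classical_set_scope.
Local Open Scope ring_scope.

Definition expfam_dens {X : Type} {R : realType}
  (h Ts : X -> R) (A : R -> R) (eta : R) : X -> R :=
  fun x => h x * expR (eta * Ts x - A eta).

Definition logloss {d} {X : measurableType d} {R : realType}
  (mu : {measure set X -> \bar R}) (q p : X -> R) : R :=
  Rintegral mu setT (fun x => p x * - ln (q x)).

Definition lambertW0 {R : realType} (x : R) : R :=
  xget 0 [set w : R | -1 <= w /\ w * expR w = x].
Definition lambertWm1 {R : realType} (x : R) : R :=
  xget 0 [set w : R | w <= -1 /\ w * expR w = x].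

From HB Require Import structures.
From mathcomp Require Import all_boot all_order all_algebra.
From mathcomp Require Import all_classical all_reals all_analysis.
From mathcomp Require Import measurable_realfun ring lra.
Import Order.TTheory GRing.Theory Num.Theory.
Import numFieldNormedType.Exports.
Local Open Scope classical_set_scope.
Local Open Scope ring_scope.

(* The log loss is affine in the natural parameter:
   [l(p_t, p_eta) - l(p_s, p_eta) = (s - t) m + A t - A s], where [m] is the mean
   of [T] under [p_eta].  By Gibbs' inequality [t = eta] minimises
   [t |-> l(p_t, p_eta)], and for [A = c1 ln + c2] this forces [eta m = c1]
   (the identity [A' = m], obtained without differentiating under the integral).
   The equation [l(p_t, p_eta) = l(p_eta2, p_eta)] then becomes
   [ln t - t / eta = ln eta2 - eta2 / eta], i.e. [w e^w = x] for [w = - t / eta];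
   as [w e^w] is strictly monotone on each side of [-1], its solutions are
   exactly [W0 x] and [W-1 x]. *)

Section ExpLn.
Context {R : realType}.
Implicit Types a b c u w x y : R.

Lemma expR_sub1_subx_bounds u : `|u| <= 1/2 -> 0 <= expR u - 1 - u <= 2 * u ^+ 2.
Proof.
rewrite ler_norml => /andP[u_ge u_le].
have := expR_ge1Dx u; have := expR_ge1Dx (- u).
have expRN : expR u * expR (- u) = 1 by rewrite -expRD subrr expR0.
have := expR_gt0 u; have := expR_gt0 (- u).
move=> *; apply/andP; split; first lra.
have : expR u * (1 - u) <= 1 by nra.
nra.
Qed.

(* Comparing [a (e^u - 1)] with its tangent [a u] at both [u = t] and [u = -t]
   gives [|a - c| <= 2 |a| t] for every small [t > 0]. *)
Lemma expR_sub1_tangent a c : (forall u, a * (expR u - 1) <= c * u) -> a = c.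
Proof.
move=> le_ac.
have near0 t : 0 < t -> t <= 1/2 -> `|a - c| <= 2 * `|a| * t.
  move=> t0 t12.
  have [r0 r1] : 0 <= expR t - 1 - t /\ expR t - 1 - t <= 2 * t ^+ 2.
    by apply/andP/expR_sub1_subx_bounds; rewrite gtr0_norm.
  have [s0 s1] : 0 <= expR (- t) - 1 + t /\ expR (- t) - 1 + t <= 2 * t ^+ 2.
    rewrite -[t in _ + t]opprK -[t ^+ 2]sqrrN.
    by apply/andP/expR_sub1_subx_bounds; rewrite normrN gtr0_norm.
  have := le_ac t; have := le_ac (- t).
  have : - `|a| <= a <= `|a| by rewrite -ler_norml.
  case/andP=> *; rewrite ler_norml; apply/andP; split; nra.
suff : `|a - c| <= 0 by rewrite normr_le0 subr_eq0 => /eqP.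
apply/ler_addgt0Pr => e e0.
pose k := 2 * `|a| + 1.
have k0 : 0 < k by rewrite /k; have := normr_ge0 a; lra.
pose t := Num.min (1/2) (e / k).
have t0 : 0 < t by rewrite /t lt_min (divr_gt0 e0 k0) andbT; lra.
have tk : t * k <= e by rewrite -ler_pdivlMr // /t ge_min lexx orbT.
have t12 : t <= 1/2 by rewrite /t ge_min lexx.
have := near0 t t0 t12.
have := normr_ge0 a; rewrite /k in tk; nra.
Qed.

Lemma expR_mul1B_lt1 {u} : u != 0 -> expR u * (1 - u) < 1.
Proof.
move=> u0; have : 1 - u < expR (- u) by apply: expR_gt1Dx; rewrite oppr_eq0.
have : expR u * expR (- u) = 1 by rewrite -expRD subrr expR0.
have := expR_gt0 u; nra.
Qed.

Lemma mul_expR_ge w : - expR (-1) <= w * expR w.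
Proof.
have : expR w = expR (-1) * expR (w + 1) by rewrite -expRD; congr expR; ring.
have : 1 - (w + 1) <= expR (- (w + 1)) := expR_ge1Dx _.
have : expR (w + 1) * expR (- (w + 1)) = 1 by rewrite -expRD subrr expR0.
have := expR_gt0 (w + 1); have := expR_gt0 (-1 : R).
move=> ? ? ? ? ->.
have : -1 <= w * expR (w + 1) by nra.
nra.
Qed.

Lemma mul_expR_lt {a b} : -1 <= a -> a < b -> a * expR a < b * expR b.
Proof.
move=> a_ge ab; set d := b - a.
have d0 : 0 < d by rewrite subr_gt0.
have -> : expR b = expR a * expR d by rewrite -expRD /d; congr expR; ring.
suff : a < b * expR d by have := expR_gt0 a; nra.
have [b0|b0] := lerP 0 b; first by have := expR_ge1Dx d; nra.
have d1 : d < 1 by rewrite /d; lra.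
have lt1 := expR_mul1B_lt1 (lt0r_neq0 d0).
have : b * expR d * (1 - d) > a * (1 - d) by rewrite /d in lt1 d1 *; nra.
by rewrite -subr_gt0 in d1; rewrite ltr_pM2r.
Qed.

Lemma mul_expR_gt {a b} : b <= -1 -> a < b -> b * expR b < a * expR a.
Proof.
move=> b_le ab; set d := a - b.
have d0 : d < 0 by rewrite subr_lt0.
have -> : expR a = expR b * expR d by rewrite -expRD /d; congr expR; ring.
suff : b < a * expR d by have := expR_gt0 b; nra.
have lt1 := expR_mul1B_lt1 (ltr0_neq0 d0).
have : a * expR d * (1 - d) > b * (1 - d) by rewrite /d in lt1 d0 *; nra.
by rewrite ltr_pM2r // subr_gt0 (lt_trans d0).
Qed.

Lemma continuous_mul_expR : continuous (fun w : R => w * expR w).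
Proof. by move=> w; apply: continuousM; [exact: cvg_id | exact: continuous_expR]. Qed.

Lemma mul_expR_surj_ge x : - expR (-1) <= x <= 0 ->
  exists2 w, -1 <= w & w * expR w = x.
Proof.
case/andP=> x_ge x_le.
have x_between : Num.min (-1 * expR (-1)) (0 * expR 0) <= x <=
                 Num.max (-1 * expR (-1)) (0 * expR 0).
  by rewrite mul0r mulN1r ge_min le_max x_ge x_le orbT.
have [|w] := IVT _ (continuous_subspaceT continuous_mul_expR) x_between.
  by rewrite lerN10.
by rewrite in_itv /= => /andP[w_ge _]; exists w.
Qed.

(* For [y > 0], [e^y >= y^2 / 2] gives [y e^-y <= 2 / y], so [y := 1 - 2 / x]
   yields [-y e^-y >= x]. *)
Lemma mul_expR_surj_le x : - expR (-1) <= x < 0 ->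
  exists2 w, w <= -1 & w * expR w = x.
Proof.
case/andP=> x_ge x_lt0; pose y := 1 - 2 / x.
have y_ge1 : 1 <= y by rewrite /y lerDl oppr_ge0 ler_ndivrMr // mul0r.
have y0 : 0 < y by lra.
have fy_ge : x <= - y * expR (- y).
  have : 1 + y ^+ 2 / 2 <= expR y := expR_ge1Dxn 1 (ltW y0).
  have : expR y * expR (- y) = 1 by rewrite -expRD subrr expR0.
  have : y * x = x - 2 by rewrite /y mulrBl mul1r divfK ?ltr0_neq0.
  have := expR_gt0 (- y); nra.
have x_between : Num.min (- y * expR (- y)) (-1 * expR (-1)) <= x <=
                 Num.max (- y * expR (- y)) (-1 * expR (-1)).
  by rewrite mulN1r ge_min le_max fy_ge x_ge orbT.
have [|w] := IVT _ (continuous_subspaceT continuous_mul_expR) x_between.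
  by rewrite lerN2.
by rewrite in_itv /= => /andP[_ w_le]; exists w.
Qed.

Lemma lambertW0_spec {x} : - expR (-1) <= x < 0 ->
  -1 <= lambertW0 x /\ lambertW0 x * expR (lambertW0 x) = x.
Proof.
case/andP=> x_ge /ltW x_le.
have [w w_ge wx] := @mul_expR_surj_ge x ltac:(by rewrite x_ge x_le).
by apply: (@xgetPex _ 0 [set w | -1 <= w /\ w * expR w = x]); exists w.
Qed.

Lemma lambertWm1_spec {x} : - expR (-1) <= x < 0 ->
  lambertWm1 x <= -1 /\ lambertWm1 x * expR (lambertWm1 x) = x.
Proof.
move=> /mul_expR_surj_le[w w_le wx].
by apply: (@xgetPex _ 0 [set w | w <= -1 /\ w * expR w = x]); exists w.
Qed.

Lemma mul_expR_eq_lambertW x w : - expR (-1) <= x < 0 ->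
  w * expR w = x <-> w = lambertW0 x \/ w = lambertWm1 x.
Proof.
move=> x_range; have [W0_ge W0x] := lambertW0_spec x_range.
have [Wm1_le Wm1x] := lambertWm1_spec x_range.
split; last by case=> ->.
move=> wx; have [w_ge|w_lt] := lerP (-1) w; [left|right].
- case: (ltgtP w (lambertW0 x)) => // lt_w; exfalso.
  + by move: (mul_expR_lt w_ge lt_w); rewrite wx W0x ltxx.
  + by move: (mul_expR_lt W0_ge lt_w); rewrite wx W0x ltxx.
- case: (ltgtP w (lambertWm1 x)) => // lt_w; exfalso.
  + by move: (mul_expR_gt Wm1_le lt_w); rewrite wx Wm1x ltxx.
  + by move: (mul_expR_gt (ltW w_lt) lt_w); rewrite wx Wm1x ltxx.
Qed.

Lemma subr_le_mul_lnB {a b} : 0 < a -> 0 < b ->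
  a - b <= a * (ln a - ln b).
Proof.
move=> a0 b0.
have : 1 + (ln b - ln a) <= expR (ln b - ln a) := expR_ge1Dx _.
rewrite expRD lnK ?posrE // expRN lnK ?posrE // => le_ba.
have : b = a * (b / a) by rewrite mulrC divfK ?gt_eqF.
nra.
Qed.

End ExpLn.

Section RealIntegrable.
Variables (R : realType) (d : measure_display) (X : measurableType d).
Variables (mu : {measure set X -> \bar R}).

Lemma integrableB_EFin (f g : X -> R) :
  mu.-integrable setT (EFin \o f) -> mu.-integrable setT (EFin \o g) ->
  mu.-integrable setT (EFin \o (fun x => f x - g x)).
Proof. by move=> f_int g_int; apply: eq_integrable (integrableB _ f_int g_int). Qed.

Lemma integrableZl_EFin (k : R) (f : X -> R) :
  mu.-integrable setT (EFin \o f) ->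
  mu.-integrable setT (EFin \o (fun x => k * f x)).
Proof. by move=> f_int; apply: eq_integrable (integrableZl _ k f_int). Qed.

End RealIntegrable.

Section ExpFamily.
Variables (R : realType) (d : measure_display) (X : measurableType d).
Variables (mu : {measure set X -> \bar R}) (h Ts : X -> R) (A : R -> R).
Hypotheses (h_meas : measurable_fun setT h) (h_ge0 : forall x, 0 <= h x).
Hypothesis T_meas : measurable_fun setT Ts.
Hypothesis hA : forall eta : R, 0 < eta ->
  (\int[mu]_x (h x * expR (eta * Ts x))%:E = (expR (A eta))%:E)%E.
Hypothesis hfin : forall eta eta' : R, 0 < eta -> 0 < eta' ->
  mu.-integrable setT
    (fun x => (expfam_dens h Ts A eta x * - ln (expfam_dens h Ts A eta' x))%:E).

Local Notation p := (expfam_dens h Ts A).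

Lemma expfam_dens_ge0 t y : 0 <= p t y.
Proof. by rewrite mulr_ge0 ?expR_ge0. Qed.

Lemma expfam_densE t y : p t y = expR (- A t) * (h y * expR (t * Ts y)).
Proof. by rewrite /expfam_dens mulrCA -expRD addrC. Qed.

Lemma measurable_expfam_dens t : measurable_fun setT (p t).
Proof.
apply: (eq_measurable_fun (fun y => expR (- A t) * (h y * expR (t * Ts y)))).
  by move=> y _; rewrite expfam_densE.
apply: measurable_funM => //; apply: measurable_funM => //.
by apply: measurableT_comp => //; apply: measurable_funM.
Qed.

Lemma integral_expfam_dens t : 0 < t -> (\int[mu]_y (p t y)%:E = 1%:E)%E.
Proof.
move=> t0; under eq_integral do rewrite expfam_densE EFinM.
rewrite ge0_integralZl //.
- by rewrite hA // -EFinM -expRD addNr expR0.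
- apply/measurable_EFinP; apply: measurable_funM => //.
  by apply: measurableT_comp => //; apply: measurable_funM.
- by move=> y _; rewrite lee_fin mulr_ge0 ?expR_ge0.
Qed.

Lemma integrable_expfam_dens t : 0 < t -> mu.-integrable setT (EFin \o p t).
Proof.
move=> t0; apply/integrableP; split; first exact/measurable_EFinP/measurable_expfam_dens.
under eq_integral do rewrite /= ger0_norm ?expfam_dens_ge0 //.
by rewrite integral_expfam_dens ?ltry.
Qed.

Lemma Rintegral_expfam_dens {t} : 0 < t -> Rintegral mu setT (p t) = 1.
Proof. by move=> t0; rewrite /Rintegral integral_expfam_dens. Qed.

Lemma ln_expfam_dens t y : 0 < h y -> ln (p t y) = ln (h y) + (t * Ts y - A t).
Proof. by move=> hy; rewrite lnM ?posrE ?expR_gt0 // expRK. Qed.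

Lemma logloss_integrandE s t y :
  p s y * - ln (p t y) = p s y * - ln (h y) - t * (p s y * Ts y) + A t * p s y.
Proof.
have [hy0|hy0] := eqVneq (h y) 0; first by rewrite /expfam_dens hy0 !mul0r; ring.
by rewrite ln_expfam_dens ?lt0r ?hy0 ?h_ge0 //; ring.
Qed.

Lemma logloss_integrand_gibbs s t y :
  p s y - p t y <= p s y * - ln (p t y) - p s y * - ln (p s y).
Proof.
have [hy0|hy0] := eqVneq (h y) 0; first by rewrite /expfam_dens hy0 !mul0r subrr.
have hy : 0 < h y by rewrite lt0r hy0 h_ge0.
have p_gt0 r : 0 < p r y by rewrite mulr_gt0 ?expR_gt0.
have := subr_le_mul_lnB (p_gt0 s) (p_gt0 t).
by rewrite !mulrN mulrBr; lra.
Qed.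

Definition expfam_mean t := Rintegral mu setT (fun y => p t y * Ts y).

Lemma integrable_expfam_mean t : 0 < t ->
  mu.-integrable setT (EFin \o (fun y => p t y * Ts y)).
Proof.
move=> t0.
pose F r y := p t y * - ln (p r y).
apply: (eq_integrable _ (EFin \o (fun y => F 1 y - F 2 y - (A 1 - A 2) * p t y))) => //.
  by move=> y _ /=; rewrite /F !logloss_integrandE; congr EFin; ring.
apply: integrableB_EFin; first by apply: integrableB_EFin; apply: hfin; lra.
exact/integrableZl_EFin/integrable_expfam_dens.
Qed.

Lemma logloss_expfam_sub eta t s : 0 < eta -> 0 < t -> 0 < s ->
  logloss mu (p t) (p eta) - logloss mu (p s) (p eta) =
  (s - t) * expfam_mean eta + (A t - A s).
Proof.
move=> eta0 t0 s0; rewrite /logloss -RintegralB ?hfin //.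
transitivity (Rintegral mu setT
    (fun y => (s - t) * (p eta y * Ts y) + (A t - A s) * p eta y)).
  by apply: eq_Rintegral => y _; rewrite !logloss_integrandE; ring.
rewrite RintegralD //; last 2 first.
- exact/integrableZl_EFin/integrable_expfam_mean.
- exact/integrableZl_EFin/integrable_expfam_dens.
rewrite !RintegralZl ?integrable_expfam_mean ?integrable_expfam_dens //.
by rewrite Rintegral_expfam_dens ?mulr1.
Qed.

Lemma logloss_expfam_ge {eta t} : 0 < eta -> 0 < t ->
  logloss mu (p eta) (p eta) <= logloss mu (p t) (p eta).
Proof.
move=> eta0 t0; rewrite -subr_ge0 /logloss -RintegralB ?hfin //.
rewrite -(subrr 1) -{1}(Rintegral_expfam_dens eta0) -(Rintegral_expfam_dens t0).
rewrite -RintegralB ?integrable_expfam_dens //.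
apply: le_Rintegral => //; last by move=> y _; apply: logloss_integrand_gibbs.
- by apply: integrableB_EFin; apply: integrable_expfam_dens.
- by apply: integrableB_EFin; apply: hfin.
Qed.

Variables (c1 c2 : R).
Hypothesis hc1 : c1 != 0.
Hypothesis hAform : forall eta : R, 0 < eta -> A eta = c1 * ln eta + c2.

(* Along [t = eta e^u], Gibbs' inequality reads [eta m (e^u - 1) <= c1 u]. *)
Lemma expfam_mean_log_partition {eta} : 0 < eta -> eta * expfam_mean eta = c1.
Proof.
move=> eta0; apply: expR_sub1_tangent => u.
have t0 : 0 < eta * expR u by rewrite mulr_gt0 ?expR_gt0.
have := logloss_expfam_ge eta0 t0.
rewrite -subr_ge0 logloss_expfam_sub // !hAform // lnM ?posrE ?expR_gt0 // expRK.
nra.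
Qed.

Lemma logloss_expfam_sub_eq0 eta t s : 0 < eta -> 0 < t -> 0 < s ->
  logloss mu (p t) (p eta) - logloss mu (p s) (p eta) = 0 <->
  - (t / eta) * expR (- (t / eta)) = - (s / eta) * expR (- (s / eta)).
Proof.
move=> eta0 t0 s0.
have mean_eq : expfam_mean eta = c1 / eta.
  by rewrite -(expfam_mean_log_partition eta0) mulrAC divff ?gt_eqF ?mul1r.
have mul_expRE r : 0 < r ->
    - (r / eta) * expR (- (r / eta)) = - eta^-1 * expR (ln r - r / eta).
  by move=> r0; rewrite expRD lnK ?posrE //; ring.
rewrite logloss_expfam_sub // !hAform // mean_eq !mul_expRE //.
have -> : (s - t) * (c1 / eta) + (c1 * ln t + c2 - (c1 * ln s + c2)) =
          c1 * ((ln t - t / eta) - (ln s - s / eta)) by ring.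
split; first by move/eqP; rewrite mulf_eq0 (negbTE hc1) subr_eq0 => /eqP ->.
have etaV_neq0 : - eta^-1 != 0 by rewrite oppr_eq0 invr_eq0 gt_eqF.
by move/(mulfI etaV_neq0)/expR_inj ->; rewrite subrr mulr0.
Qed.

End ExpFamily.

Theorem theorem6 (R : realType) (d : measure_display) (X : measurableType d)
  (mu : {measure set X -> \bar R}) (h Ts : X -> R) (A : R -> R) (c1 c2 : R)
  (h_meas : measurable_fun setT h) (h_ge0 : forall x, 0 <= h x)
  (T_meas : measurable_fun setT Ts)
  (hA : forall eta : R, 0 < eta ->
     (\int[mu]_x (h x * expR (eta * Ts x))%:E = (expR (A eta))%:E)%E)
  (hmin : ~ (exists c : R, {ae mu, forall x, 0 < h x -> Ts x = c}))
  (hfin : forall eta eta' : R, 0 < eta -> 0 < eta' ->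
     mu.-integrable setT
       (fun x => (expfam_dens h Ts A eta x * - ln (expfam_dens h Ts A eta' x))%:E))
  (hc1 : c1 != 0)
  (hAform : forall eta : R, 0 < eta -> A eta = c1 * ln eta + c2)
  (eta eta2 : R) (heta : 0 < eta) (heta2 : 0 < eta2) :
  let x := - (eta2 / eta) * expR (- (eta2 / eta)) in
  [set eta1 : R | 0 < eta1 /\
     logloss mu (expfam_dens h Ts A eta1) (expfam_dens h Ts A eta)
     - logloss mu (expfam_dens h Ts A eta2) (expfam_dens h Ts A eta) = 0]
  = [set - eta * lambertW0 x; - eta * lambertWm1 x].
Proof.
(* [hmin] is implied: a.e. constant [T] would make [A] affine, not [c1 ln + c2]. *)
move=> x.
have x_range : - expR (-1) <= x < 0.
  by rewrite /x mul_expR_ge pmulr_llt0 ?expR_gt0 // oppr_lt0 divr_gt0.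
have loss_eq0 := @logloss_expfam_sub_eq0 _ _ _ mu _ _ _
  h_meas h_ge0 T_meas hA hfin _ _ hc1 hAform eta _ eta2 heta.
apply/seteqP; split => t /=.
- case=> t0 /(loss_eq0 _ t0 heta2)/(mul_expR_eq_lambertW _ _ x_range) W_eq.
  have -> : t = - eta * (- (t / eta)) by field; rewrite gt_eqF.
  by case: W_eq => <-; [left | right].
- move=> t_W.
  have [w [-> Ww]] : exists w, t = - eta * w /\ (w = lambertW0 x \/ w = lambertWm1 x).
    by case: t_W => ->; eexists; (split; first reflexivity); [left | right].
  have wx := (mul_expR_eq_lambertW _ _ x_range).2 Ww.
  have w0 : w < 0 by rewrite -(pmulr_llt0 _ (expR_gt0 w)) wx; case/andP: x_range.
  have t0 : 0 < - eta * w by rewrite mulNr -mulrN mulr_gt0 // oppr_gt0.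
  split => //; apply/(loss_eq0 _ t0 heta2).
  by have -> : - (- eta * w / eta) = w by field; rewrite gt_eqF.
Qed.
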